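(* For all integers $n\ge 3$ and all integers $d$, $$b_n^d=v_{n-1}^{d-2},\qquad w_n^d=v_{n-1}^d+w_{n-1}^{d-1}+v_{n-2}^{d-2},\qquad v_n^d=v_{n-1}^d+w_{n-1}^{d-1}+v_{n-1}^{d-2}+v_{n-2}^{d-2}.$$
   Context: The $2\times n$ Miura-ori $M_{2,n}$ ($n\ge1$) has faces $\alpha_{i,j}$ ($i\in\{1,2\}$, $j\in\{1,\dots,n\}$), interior vertices $x_1,\dots,x_{n-1}$, and creases $e_0$ and $e_{3k-1},e_{3k},e_{3k+1}$ ($k=1,\dots,n-1$). At $x_k$ the creases are left $e_{3k-3}$, top $e_{3k-1}$, right $e_{3k}$, bottom $e_{3k+1}$. Face $\alpha_{1,j}$ is bordered by those of $e_{3j-4}$ (iff $j\ge2$), $e_{3j-3}$, $e_{3j-1}$ (iff $j\le n-1$); $\alpha_{2,j}$ by those of $e_{3j-2}$ (iff $j\ge2$), $e_{3j-3}$, $e_{3j+1}$ (iff $j\le n-1$). An MV assignment $\mu$ maps creases to $\{1,-1\}$; it is locally valid if for each $k$ exactly one of $\mu(e_{3k-1}),\mu(e_{3k}),\mu(e_{3k+1})$ differs from $\mu(e_{3k-3})$. The face flip $\mu_\alpha$ negates $\mu$ on the creases bordering $\alpha$; $\alpha$ is flippable under $\mu$ if $\mu,\mu_\alpha$ are both locally valid; $f(\mu)$ is the number of flippable faces. For $n\ge 2$, the restriction of a locally valid $\mu'$ on $M_{2,n}$ to the creases of $M_{2,n-1}$ (all but $e_{3n-4},e_{3n-3},e_{3n-2}$)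 is a locally valid $\mu$ on $M_{2,n-1}$; $\mu'$ is blue if $f(\mu')-f(\mu)=2$ and non-blue otherwise. Both locally valid assignments of $M_{2,1}$ are blue. Let $v_n^d$ be the number of locally valid MV assignments of $M_{2,n}$ with exactly $d$ flippable faces, $b_n^d$ the number of these that are blue, and $w_n^d=v_n^d-b_n^d$ the number that are non-blue (all these are $0$ when no such assignment exists). *)

From mathcomp Require Import all_boot all_order all_algebra.
Set Implicit Arguments. Unset Strict Implicit. Unset Printing Implicit Defensive.

(* Creases of M_{2,n}: e_0 and e_{3k-1}, e_{3k}, e_{3k+1} for k = 1..n-1,
   i.e. the indices i < 3n-1 with i <> 1. *)
Definition crease (n : nat) := {i : 'I_(3 * n - 1) | (i : nat) != 1%N}.

(* An MV assignment: true encodes 1, false encodes -1. *)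
Definition mvassign (n : nat) := {ffun crease n -> bool}.

(* Value of mu on crease e_j (default false for non-creases, never used). *)
Definition mv_at (n : nat) (mu : mvassign n) (j : nat) : bool :=
  match (insub j : option 'I_(3 * n - 1)) with
  | Some i => match (insub i : option (crease n)) with
              | Some c => mu c
              | None => false
              end
  | None => false
  end.

(* Local validity: for each interior vertex x_k, k = 1..n-1, exactly one of
   the top/right/bottom creases differs from the left crease e_{3k-3}. *)
Definition locally_valid (n : nat) (mu : mvassign n) : bool :=
  [forall k : 'I_n, (0 < k)%N ==>
     ((mv_at mu (3 * k - 1) != mv_at mu (3 * k - 3))
      + (mv_at mu (3 * k) != mv_at mu (3 * k - 3))
      + (mv_at mu (3 * k + 1) != mv_at mu (3 * k - 3)) == 1)%N].

(* Face alpha_{i,j}, i in {1,2}, j in {1..n}, is encoded as (i-1, j-1). *)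
Definition face (n : nat) := ('I_2 * 'I_n)%type.

(* Does face alpha_{i,j} (i, j 1-based) border crease e_c ? *)
Definition borders (n i j c : nat) : bool :=
  if i == 1%N then
    [|| (1 < j)%N && (c == 3 * j - 4)%N, (c == 3 * j - 3)%N
      | (j <= n - 1)%N && (c == 3 * j - 1)%N]
  else
    [|| (1 < j)%N && (c == 3 * j - 2)%N, (c == 3 * j - 3)%N
      | (j <= n - 1)%N && (c == 3 * j + 1)%N].

Definition flip (n : nat) (a : face n) (mu : mvassign n) : mvassign n :=
  [ffun c : crease n =>
     if borders n (a.1 : nat).+1 (a.2 : nat).+1 (val (val c)) then ~~ mu c
     else mu c].

Definition flippable (n : nat) (mu : mvassign n) (a : face n) : bool :=
  locally_valid mu && locally_valid (flip a mu).

Definition nflip (n : nat) (mu : mvassign n) : nat :=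
  #|[pred a : face n | flippable mu a]|.

Definition restr (n : nat) (mu : mvassign n) : mvassign n.-1 :=
  [ffun c : crease n.-1 => mv_at mu (val (val c))].

Definition blue (n : nat) (mu : mvassign n) : bool :=
  if (n <= 1)%N then true
  else (Posz (nflip mu) - Posz (nflip (restr mu)) == 2)%R.

Definition vcount (n : nat) (d : int) : nat :=
  #|[pred mu : mvassign n | locally_valid mu && (Posz (nflip mu) == d)]|.

Definition bcount (n : nat) (d : int) : nat :=
  #|[pred mu : mvassign n | [&& locally_valid mu, blue mu & (Posz (nflip mu) == d)]]|.

Definition wcount (n : nat) (d : int) : nat :=
  #|[pred mu : mvassign n | [&& locally_valid mu, ~~ blue mu & (Posz (nflip mu) == d)]]|.

(* Validity at a vertex x_k only involves the four creases at x_k, and the flip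
   of a face only changes creases at its two end vertices.  A case analysis
   shows that alpha_{1,j} is flippable iff the bottom crease of x_{j-1} and the
   top crease of x_j agree with their left creases, when these vertices exist
   (top and bottom exchanged for alpha_{2,j}), so f is a sum of contributions
   of consecutive vertices.
   A locally valid assignment of M_{2,n} is a locally valid mu on M_{2,n-1}
   together with the choice of the one crease of x_{n-1} that differs.  If it is
   the right crease, the extension is blue and f grows by 2.  If it is the top
   (bottom) crease, f grows by 1 or 0 according as the bottom (top) crease of
   x_{n-2} differs or not; at most one of these two creases of x_{n-2} differs,
   and both agree iff mu is blue.
   Summing over mu gives b_n^d = v_{n-1}^{d-2} and
   w_n^d = v_{n-1}^d + b_{n-1}^d + w_{n-1}^{d-1}, whence the three identities. *)

From mathcomp Require Import all_boot all_order all_algebra zify.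
Import GRing.Theory.
Set Implicit Arguments. Unset Strict Implicit. Unset Printing Implicit Defensive.

Lemma card_pred_sum (T : finType) (P : pred T) :
  #|[pred x | P x]| = (\sum_x (P x : nat))%N.
Proof.
rewrite -sum1_card big_mkcond /=; apply: eq_bigr => x _.
by rewrite inE; case: (P x).
Qed.

Lemma mv_atE n (mu : mvassign n) j (j_lt : (j < 3 * n - 1)%N) (j_neq1 : j != 1%N) :
  mv_at mu j = mu (Sub (Ordinal j_lt) j_neq1).
Proof.
rewrite /mv_at insubT /=.
by case: insubP => [c _ c_val|]; [congr (mu _); apply: val_inj; rewrite c_val | rewrite j_neq1].
Qed.

Lemma mv_at_crease n (mu : mvassign n) (c : crease n) : mv_at mu (val (val c)) = mu c.
Proof.
case: c => [[i i_lt] i_neq1] /=.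
by rewrite (mv_atE mu i_lt i_neq1); congr (mu _); apply: val_inj.
Qed.

Lemma mv_at1 n (mu : mvassign n) : mv_at mu 1 = false.
Proof. by rewrite /mv_at; case: insubP => [i _ i_val|//]; rewrite insubN // i_val. Qed.

Lemma mv_at_flip n (a : face n) (mu : mvassign n) j : (j < 3 * n - 1)%N -> j != 1%N ->
  mv_at (flip a mu) j = mv_at mu j (+) borders n (a.1).+1 (a.2).+1 j.
Proof.
move=> j_lt j_neq1; rewrite !(mv_atE _ j_lt j_neq1) /flip ffunE /=.
by case: borders; case: (mu _).
Qed.

Lemma mv_at_restr n (mu : mvassign n) j : (j < 3 * n.-1 - 1)%N ->
  mv_at (restr mu) j = mv_at mu j.
Proof.
move=> j_lt; have [->|j_neq1] := eqVneq j 1%N; first by rewrite !mv_at1.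
by rewrite (mv_atE _ j_lt j_neq1) ffunE.
Qed.

Section VertexCreases.
Variables (n : nat) (mu : mvassign n).

Definition top_differs k := mv_at mu (3 * k - 1) != mv_at mu (3 * k - 3).
Definition right_differs k := mv_at mu (3 * k) != mv_at mu (3 * k - 3).
Definition bottom_differs k := mv_at mu (3 * k + 1) != mv_at mu (3 * k - 3).

Definition valid_at k := (top_differs k + right_differs k + bottom_differs k == 1)%N.

Lemma locally_validE : locally_valid mu = [forall k : 'I_n, (0 < k)%N ==> valid_at k].
Proof. by []. Qed.

End VertexCreases.

Section FaceCreasesAtVertex.
Variables (n k j : nat).
Hypotheses (k_gt0 : (0 < k)%N) (k_lt_n : (k < n)%N).

Lemma borders_top_face :
  [/\ borders n 1 j.+1 (3 * k - 3) = (k == j.+1),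
      borders n 1 j.+1 (3 * k - 1) = (k == j) || (k == j.+1),
      borders n 1 j.+1 (3 * k) = (k == j)
    & borders n 1 j.+1 (3 * k + 1) = false].
Proof. by rewrite /borders /=; split; apply/idP/idP; lia. Qed.

Lemma borders_bottom_face :
  [/\ borders n 2 j.+1 (3 * k - 3) = (k == j.+1),
      borders n 2 j.+1 (3 * k - 1) = false,
      borders n 2 j.+1 (3 * k) = (k == j)
    & borders n 2 j.+1 (3 * k + 1) = (k == j) || (k == j.+1)].
Proof. by rewrite /borders /=; split; apply/idP/idP; lia. Qed.

End FaceCreasesAtVertex.

(* [p]: the flipped face lies right of the vertex (it borders the top and right
   creases); [q]: it lies left of it (it borders the left and top creases). *)
Lemma exactly_one_differs_flip_top (L T R B p q : bool) : ~~ (p && q) ->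
  ((T != L) + (R != L) + (B != L) == 1)%N ->
  (((T (+) (p || q)) != (L (+) q)) + ((R (+) p) != (L (+) q)) + (B != (L (+) q)) == 1)%N
  = (p ==> ~~ (B != L)) && (q ==> ~~ (T != L)).
Proof. by case: L; case: T; case: R; case: B; case: p; case: q. Qed.

Lemma exactly_one_differs_flip_bottom (L T R B p q : bool) : ~~ (p && q) ->
  ((T != L) + (R != L) + (B != L) == 1)%N ->
  ((T != (L (+) q)) + ((R (+) p) != (L (+) q)) + ((B (+) (p || q)) != (L (+) q)) == 1)%N
  = (p ==> ~~ (T != L)) && (q ==> ~~ (B != L)).
Proof. by case: L; case: T; case: R; case: B; case: p; case: q. Qed.

Definition bottom_face : 'I_2 := @Ordinal 2 1 isT.

Section FlipAtVertex.
Variables (n : nat) (mu : mvassign n) (j : 'I_n) (k : nat).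
Hypotheses (k_gt0 : (0 < k)%N) (k_lt_n : (k < n)%N) (mu_k : valid_at mu k).

Lemma valid_at_flip_top :
  valid_at (flip (ord0, j) mu) k =
  ((k == j) ==> ~~ bottom_differs mu k) && ((k == j.+1) ==> ~~ top_differs mu k).
Proof.
move: mu_k; rewrite /valid_at /top_differs /right_differs /bottom_differs.
rewrite !mv_at_flip /=; try lia.
have [-> -> -> ->] := borders_top_face j k_gt0 k_lt_n.
by rewrite addbF; apply: exactly_one_differs_flip_top; lia.
Qed.

Lemma valid_at_flip_bottom :
  valid_at (flip (bottom_face, j) mu) k =
  ((k == j) ==> ~~ top_differs mu k) && ((k == j.+1) ==> ~~ bottom_differs mu k).
Proof.
move: mu_k; rewrite /valid_at /top_differs /right_differs /bottom_differs.
rewrite !mv_at_flip /=; try lia.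
have [-> -> -> ->] := borders_bottom_face j k_gt0 k_lt_n.
by rewrite addbF; apply: exactly_one_differs_flip_bottom; lia.
Qed.

End FlipAtVertex.

Lemma forall_interior_adjacent n (j : 'I_n) (X Y : nat -> bool) :
  [forall k : 'I_n, (0 < k)%N ==> (((k : nat) == j) ==> X k) && (((k : nat) == j.+1) ==> Y k)]
  = (((j : nat) == 0%N) || X j) && ((j.+1 == n) || Y j.+1).
Proof.
apply/forallP/andP => [all_k | [X_j Y_j1] k].
- split.
  + have [->//|j_gt0] := posnP j.
    by have := all_k j; rewrite j_gt0 eqxx /= => /andP[].
  + have [j1_lt|j1_ge] := ltnP j.+1 n; last by rewrite eqn_leq j1_ge ltn_ord.
    have := all_k (Ordinal j1_lt); rewrite /= eqxx (gtn_eqF (ltnSn j)) /=.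
    by move=> ->; rewrite orbT.
- apply/implyP => k_gt0; apply/andP; split; apply/implyP => /eqP k_eq.
  + by move: X_j; rewrite -k_eq (negbTE (lt0n_neq0 k_gt0)).
  + by move: Y_j1; rewrite -k_eq (ltn_eqF (ltn_ord k)).
Qed.

Section Flippable.
Variables (n : nat) (mu : mvassign n).
Hypothesis mu_valid : locally_valid mu.

Lemma flippable_top (j : 'I_n) : flippable mu (ord0, j) =
  (((j : nat) == 0%N) || ~~ bottom_differs mu j) && ((j.+1 == n) || ~~ top_differs mu j.+1).
Proof.
rewrite /flippable mu_valid locally_validE.
rewrite -(forall_interior_adjacent j (fun k => ~~ bottom_differs mu k) (fun k => ~~ top_differs mu k)).
apply: eq_forallb => k; have [->//|k_gt0] := posnP k.
by rewrite /= valid_at_flip_top //; move/forallP: mu_valid => /(_ k); rewrite k_gt0.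
Qed.

Lemma flippable_bottom (j : 'I_n) : flippable mu (bottom_face, j) =
  (((j : nat) == 0%N) || ~~ top_differs mu j) && ((j.+1 == n) || ~~ bottom_differs mu j.+1).
Proof.
rewrite /flippable mu_valid locally_validE.
rewrite -(forall_interior_adjacent j (fun k => ~~ top_differs mu k) (fun k => ~~ bottom_differs mu k)).
apply: eq_forallb => k; have [->//|k_gt0] := posnP k.
by rewrite /= valid_at_flip_bottom //; move/forallP: mu_valid => /(_ k); rewrite k_gt0.
Qed.

End Flippable.

Definition flippable_in_column n (mu : mvassign n) (j : nat) : nat :=
  (((j == 0%N) || ~~ bottom_differs mu j) && ((j.+1 == n) || ~~ top_differs mu j.+1)) +
  (((j == 0%N) || ~~ top_differs mu j) && ((j.+1 == n) || ~~ bottom_differs mu j.+1)).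

Lemma nflip_sum n (mu : mvassign n) : locally_valid mu ->
  nflip mu = (\sum_(j < n) flippable_in_column mu j)%N.
Proof.
move=> mu_valid; rewrite /nflip card_pred_sum.
rewrite -(pair_bigA _ (fun (i : 'I_2) (j : 'I_n) => (flippable mu (i, j) : nat))) /=.
rewrite big_ord_recl big_ord1 -big_split /=; apply: eq_bigr => j _.
have -> : lift ord0 ord0 = bottom_face :> 'I_2 by apply: val_inj.
by rewrite flippable_top // flippable_bottom.
Qed.

Section Restriction.
Variables (p : nat) (mu : mvassign p.+2).

Lemma valid_at_restr k : (k <= p)%N -> valid_at (restr mu) k = valid_at mu k.
Proof.
by move=> k_le; rewrite /valid_at /top_differs /right_differs /bottom_differs !mv_at_restr //=; lia.
Qed.

Lemma top_differs_restr k : (k <= p)%N -> top_differs (restr mu) k = top_differs mu k.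
Proof. by move=> k_le; rewrite /top_differs !mv_at_restr //=; lia. Qed.

Lemma bottom_differs_restr k : (k <= p)%N -> bottom_differs (restr mu) k = bottom_differs mu k.
Proof. by move=> k_le; rewrite /bottom_differs !mv_at_restr //=; lia. Qed.

Lemma locally_valid_restr :
  locally_valid mu = locally_valid (restr mu) && valid_at mu p.+1.
Proof.
rewrite !locally_validE; apply/forallP/andP => [valid_mu | [/forallP valid_restr valid_last] k].
- split; last by have := valid_mu ord_max.
  apply/forallP => k; have := valid_mu (widen_ord (leqnSn _) k).
  by rewrite /= valid_at_restr // -ltnS.
- have [k_lt | k_ge] := ltnP k p.+1.
    by have := valid_restr (Ordinal k_lt); rewrite /= valid_at_restr.
  by have -> : (k : nat) = p.+1 by have := ltn_ord k; lia.
Qed.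

End Restriction.

Definition last_top_agrees m (mu : mvassign m) := (m.-1 == 0%N) || ~~ top_differs mu m.-1.
Definition last_bottom_agrees m (mu : mvassign m) := (m.-1 == 0%N) || ~~ bottom_differs mu m.-1.

Definition nflip_gain m (mu : mvassign m) (top_agrees bottom_agrees : bool) : nat :=
  if top_agrees && bottom_agrees then 2
  else if top_agrees then ~~ last_top_agrees mu
  else ~~ last_bottom_agrees mu.

Section LastVertex.
Variables (p : nat) (mu : mvassign p.+2).
Hypothesis mu_valid : locally_valid mu.

Lemma nflip_restr : nflip mu = (nflip (restr mu) +
  nflip_gain (restr mu) (~~ top_differs mu p.+1) (~~ bottom_differs mu p.+1))%N.
Proof.
have := mu_valid; rewrite locally_valid_restr => /andP[restr_valid last_valid].
rewrite (nflip_sum mu_valid) (nflip_sum restr_valid) !big_ord_recr /= -!addnA; congr addn.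
  apply: eq_bigr => j _; have j_lt := ltn_ord j; rewrite /flippable_in_column /=.
  by rewrite !top_differs_restr ?bottom_differs_restr //; lia.
have -> : (p.+1 == p.+2) = false by lia.
rewrite /flippable_in_column /nflip_gain /last_top_agrees /last_bottom_agrees !eqxx /=.
rewrite !top_differs_restr // !bottom_differs_restr //.
move: last_valid; rewrite /valid_at.
by case: (top_differs mu p.+1); case: (bottom_differs mu p.+1); case: (right_differs mu p.+1);
  case: (p == 0%N); case: (top_differs mu p); case: (bottom_differs mu p).
Qed.

Lemma blueE : blue mu = ~~ top_differs mu p.+1 && ~~ bottom_differs mu p.+1.
Proof.
have := mu_valid; rewrite locally_valid_restr /valid_at => /andP[_ last_valid].
rewrite /blue /= nflip_restr PoszD addrAC subrr add0r /nflip_gain.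
move: last_valid.
by case: (top_differs mu p.+1); case: (bottom_differs mu p.+1); case: (right_differs mu p.+1);
  case: (last_top_agrees (restr mu)); case: (last_bottom_agrees (restr mu)).
Qed.

End LastVertex.

Section LastAgrees.
Variables (m : nat) (mu : mvassign m).
Hypotheses (m_gt0 : (0 < m)%N) (mu_valid : locally_valid mu).

Lemma blue_last_agrees : blue mu = last_bottom_agrees mu && last_top_agrees mu.
Proof.
case: m mu m_gt0 mu_valid => [//|[|p]] nu _ nu_valid; first by [].
by rewrite blueE // /last_bottom_agrees /last_top_agrees /= andbC.
Qed.

Lemma last_bottom_or_top_agrees : last_bottom_agrees mu || last_top_agrees mu.
Proof.
case: m mu m_gt0 mu_valid => [//|[|p]] nu _; first by [].
rewrite locally_valid_restr /last_bottom_agrees /last_top_agrees /valid_at /= => /andP[_].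
by case: (top_differs nu p.+1); case: (bottom_differs nu p.+1); case: (right_differs nu p.+1).
Qed.

End LastAgrees.

Section Extension.
Variable p : nat.

(* The creases of M_{2,p+2} missing from M_{2,p+1} are e_{3p+2}, e_{3p+3}, e_{3p+4}. *)
Definition extend (mu : mvassign p.+1) (t : bool * bool * bool) : mvassign p.+2 :=
  [ffun c : crease p.+2 => let i := val (val c) in
     if (i < 3 * p + 2)%N then mv_at mu i
     else if i == (3 * p + 2)%N then t.1.1
     else if i == (3 * p + 3)%N then t.1.2 else t.2].

Definition last_creases (mu : mvassign p.+2) : bool * bool * bool :=
  (mv_at mu (3 * p + 2), mv_at mu (3 * p + 3), mv_at mu (3 * p + 4)).

Lemma mv_at_extend (mu : mvassign p.+1) t i : (i < 3 * p + 5)%N -> i != 1%N ->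
  mv_at (extend mu t) i = if (i < 3 * p + 2)%N then mv_at mu i
     else if i == (3 * p + 2)%N then t.1.1
     else if i == (3 * p + 3)%N then t.1.2 else t.2.
Proof.
move=> i_lt i_neq1; have i_lt' : (i < 3 * p.+2 - 1)%N by lia.
by rewrite (mv_atE _ i_lt' i_neq1) ffunE.
Qed.

Lemma restr_extend (mu : mvassign p.+1) t : restr (extend mu t) = mu.
Proof.
apply/ffunP => -[[i i_lt] i_neq1]; rewrite ffunE /= mv_at_extend //=; last by lia.
have -> : (i < 3 * p + 2)%N by have := i_lt; rewrite /=; lia.
exact: mv_atE.
Qed.

Lemma last_creases_extend (mu : mvassign p.+1) t : last_creases (extend mu t) = t.
Proof.
case: t => [[x y] z]; rewrite /last_creases !mv_at_extend //=; try lia.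
by rewrite ltnn !eqxx /= !ifF ?ltn_add2l ?eqn_add2l.
Qed.

Lemma extend_restr (mu : mvassign p.+2) : extend (restr mu) (last_creases mu) = mu.
Proof.
apply/ffunP => c; rewrite ffunE -mv_at_crease; case: c => [[i i_lt] i_neq1] /=.
have [i_lt2|i_ge] := ltnP; first by apply: (@mv_at_restr p.+2) => /=; lia.
have [->|i_neq2] := eqVneq i (3 * p + 2)%N; first by [].
have [->|i_neq3] := eqVneq i (3 * p + 3)%N; first by [].
by have -> : i = (3 * p + 4)%N by have := i_lt; rewrite /=; lia.
Qed.

Lemma sum_restr_last_creases (G : mvassign p.+1 -> bool * bool * bool -> nat) :
  (\sum_(mu : mvassign p.+2) G (restr mu) (last_creases mu) =
   \sum_(mu : mvassign p.+1) \sum_t G mu t)%N.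
Proof.
rewrite (reindex (fun q => extend q.1 q.2)) /=.
  rewrite pair_bigA /=; apply: eq_bigr => -[mu t] _.
  by rewrite restr_extend last_creases_extend.
apply: onW_bij; exists (fun mu => (restr mu, last_creases mu)) => [[mu t]|mu].
  by rewrite restr_extend last_creases_extend.
by rewrite extend_restr.
Qed.

End Extension.

Lemma sum_bool3 (G : bool * bool * bool -> nat) :
  (\sum_t G t = G (true, true, true) + G (true, true, false) + G (true, false, true)
    + G (true, false, false) + G (false, true, true) + G (false, true, false)
    + G (false, false, true) + G (false, false, false))%N.
Proof.
rewrite (eq_bigr (fun t => G (t.1, t.2))) => [|[] //].
rewrite -(pair_bigA _ (fun xy z => G (xy, z))).
rewrite (eq_bigr (fun xy => \sum_z G ((xy.1, xy.2), z))) => [|[] //].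
by rewrite -(pair_bigA _ (fun x y => \sum_z G ((x, y), z))) /= !big_bool /= !addnA.
Qed.

Lemma last_vertex_differs p (mu : mvassign p.+2) (L := mv_at (restr mu) (3 * p)) :
  [/\ top_differs mu p.+1 = (last_creases mu).1.1 (+) L,
      right_differs mu p.+1 = (last_creases mu).1.2 (+) L
    & bottom_differs mu p.+1 = (last_creases mu).2 (+) L].
Proof.
rewrite {}/L (@mv_at_restr p.+2) /=; last by lia.
rewrite /top_differs /right_differs /bottom_differs /last_creases /= !negb_eqb.
by have [-> -> -> ->] : [/\ 3 * p.+1 - 1 = 3 * p + 2, 3 * p.+1 - 3 = 3 * p,
  3 * p.+1 = 3 * p + 3 & 3 * p + 3 + 1 = 3 * p + 4]%N by split; lia.
Qed.

(* The three locally valid extensions of a valid [mu] are those in which the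
   top, the right, or the bottom crease of the new vertex is the differing one. *)
Lemma count_valid_restr p (P : mvassign p.+2 -> bool) (K : mvassign p.+1 -> bool -> bool -> bool) :
  (forall mu, locally_valid mu ->
     P mu = K (restr mu) (~~ top_differs mu p.+1) (~~ bottom_differs mu p.+1)) ->
  (\sum_(mu : mvassign p.+2) (locally_valid mu && P mu : nat) =
   \sum_(mu : mvassign p.+1) (locally_valid mu : nat) *
      (K mu false true + K mu true true + K mu true false))%N.
Proof.
move=> PE.
pose G (mu : mvassign p.+1) (t : bool * bool * bool) : nat :=
  let L := mv_at mu (3 * p) in
  [&& locally_valid mu, ((t.1.1 (+) L) + (t.1.2 (+) L) + (t.2 (+) L) == 1)%N &
      K mu (~~ (t.1.1 (+) L)) (~~ (t.2 (+) L))].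
have GE (mu : mvassign p.+2) : (locally_valid mu && P mu : nat) = G (restr mu) (last_creases mu).
  have [dT dR dB] := last_vertex_differs mu; rewrite /G /= -dT -dR -dB.
  case mu_valid: (locally_valid mu); move: (mu_valid); rewrite locally_valid_restr /valid_at.
    by case/andP => -> ->; rewrite PE.
  by case: (locally_valid (restr mu)) => //= ->.
rewrite (eq_bigr _ (fun mu _ => GE mu)) sum_restr_last_creases; apply: eq_bigr => mu _.
by rewrite sum_bool3 /G; case: (locally_valid mu); case: (mv_at mu (3 * p)) => /=; lia.
Qed.

Lemma eqz_addn_subr (m k : nat) (d : int) : (Posz (m + k)%N == d) = (Posz m == (d - Posz k)%R).
Proof. by rewrite PoszD [RHS]eq_sym subr_eq eq_sym. Qed.

Lemma vcount_blue_nonblue n d : vcount n d = (bcount n d + wcount n d)%N.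
Proof.
rewrite /bcount /vcount /wcount !card_pred_sum -big_split; apply: eq_bigr => mu _ /=.
by case: (locally_valid mu); case: (blue mu); case: (_ == d).
Qed.

Lemma bcount_rec p d : bcount p.+2 d = vcount p.+1 (d - 2)%R.
Proof.
rewrite /bcount /vcount !card_pred_sum.
rewrite (@count_valid_restr p _ (fun mu X Y => [&& X, Y & Posz (nflip mu + nflip_gain mu X Y)%N == d])).
  apply: eq_bigr => mu _; rewrite /nflip_gain /= eqz_addn_subr.
  by case: (locally_valid mu) => /=; lia.
by move=> mu mu_valid; rewrite blueE // nflip_restr // andbA.
Qed.

(* A non-blue extension gains [~~ last_bottom_agrees] or [~~ last_top_agrees];
   summed over both, this is [2 [f mu = d]] for blue [mu] and
   [[f mu = d] + [f mu = d - 1]] otherwise. *)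
Lemma wcount_rec p d : wcount p.+3 d =
  (vcount p.+2 d + wcount p.+2 (d - 1)%R + bcount p.+2 d)%N.
Proof.
rewrite /wcount /vcount /bcount !card_pred_sum -!big_split.
rewrite (@count_valid_restr p.+1 _
  (fun mu X Y => ~~ (X && Y) && (Posz (nflip mu + nflip_gain mu X Y)%N == d))).
  apply: eq_bigr => mu _; rewrite /nflip_gain /=.
  case mu_valid: (locally_valid mu) => //=.
  rewrite blue_last_agrees //; have := last_bottom_or_top_agrees (isT : (0 < p.+2)%N) mu_valid.
  case: (last_bottom_agrees mu); case: (last_top_agrees mu) => //= _;
    by rewrite ?addn0 ?eqz_addn_subr /=; lia.
by move=> mu mu_valid; rewrite blueE // nflip_restr.
Qed.

Local Open Scope ring_scope.

Theorem proposition4p10 (n : nat) (d : int) : (3 <= n)%N ->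
  [/\ bcount n d = vcount n.-1 (d - 2),
      wcount n d = (vcount n.-1 d + wcount n.-1 (d - 1) + vcount n.-2 (d - 2))%N
    & vcount n d = (vcount n.-1 d + wcount n.-1 (d - 1) + vcount n.-1 (d - 2)
                    + vcount n.-2 (d - 2))%N].
Proof.
case: n => [|[|[|p]]] //= _.
have blue_rec := bcount_rec p.+1 d; have nonblue_rec := wcount_rec p d.
rewrite bcount_rec in nonblue_rec.
split => //; rewrite vcount_blue_nonblue blue_rec nonblue_rec; lia.
Qed.
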